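(* Let $k\geq 1$ and $n\geq 2$ be integers and let $r$ be an integer with $0\leq r\leq n$. Then \[C_{k,n+r}C_{k,n-r}-C_{k,n}^2=8(k-1)^{n-r+1}\,B_{k,r}^2.\]
   Context: For an integer $k\geq 1$, the generalized balancing numbers are defined by $B_{k,0}=0$, $B_{k,1}=1$ and $B_{k,n}=3kB_{k,n-1}+(1-k)B_{k,n-2}$ for $n\geq 2$; the generalized balancing-Lucas numbers are defined by $C_{k,0}=1$, $C_{k,1}=3$ and $C_{k,n}=3kC_{k,n-1}+(1-k)C_{k,n-2}$ for $n\geq 2$. *)

From Stdlib Require Import ZArith.
Open Scope Z_scope.

Fixpoint gen_pair (k : Z) (a0 a1 : Z) (n : nat) : Z * Z :=
  match n with
  | O => (a0, a1)
  | S m => let (x, y) := gen_pair k a0 a1 m in (y, 3 * k * y + (1 - k) * x)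
  end.

Definition B (k : Z) (n : nat) : Z := fst (gen_pair k 0 1 n).
Definition C (k : Z) (n : nat) : Z := fst (gen_pair k 1 3 n).

Lemma B_0 k : B k 0 = 0. Proof. reflexivity. Qed.
Lemma B_1 k : B k 1 = 1. Proof. reflexivity. Qed.
Lemma C_0 k : C k 0 = 1. Proof. reflexivity. Qed.
Lemma C_1 k : C k 1 = 3. Proof. reflexivity. Qed.
Lemma B_rec k n : B k (S (S n)) = 3 * k * B k (S n) + (1 - k) * B k n.
Proof. unfold B; simpl; destruct (gen_pair k 0 1 n); reflexivity. Qed.
Lemma C_rec k n : C k (S (S n)) = 3 * k * C k (S n) + (1 - k) * C k n.
Proof. unfold C; simpl; destruct (gen_pair k 1 3 n); reflexivity. Qed.

(* Sequences satisfying the recurrence X_{i+2} = 3k X_{i+1} + (1-k) X_i form a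
   two-dimensional space whose characteristic roots have product 1 - k, so the
   Casoratian X_{m+1} Y_m - X_m Y_{m+1} of two solutions gets multiplied by
   k - 1 at each step.  For fixed m and r, the sequence
   j |-> C_{m+r+j} C_m - C_{m+r} C_{m+j} is a solution vanishing at j = 0, hence
   equals B_j times its value at j = 1; that value is a Casoratian, equal to
   (k-1)^m (C_{r+1} - 3 C_r) = 8 (k-1)^{m+1} B_r.  Taking j = r and n = m + r
   gives the theorem. *)
From Stdlib Require Import ZArith Lia.
Open Scope Z_scope.

Section Recurrence.

Variable k : Z.

Definition linrec (X : nat -> Z) : Prop :=
  forall i, X (S (S i)) = 3 * k * X (S i) + (1 - k) * X i.

Lemma linrec_C : linrec (C k).
Proof. intro i; apply C_rec. Qed.

Lemma linrec_shift (X : nat -> Z) (s : nat) :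
  linrec X -> linrec (fun i => X (s + i)%nat).
Proof. intros HX i; rewrite !Nat.add_succ_r; apply HX. Qed.

Lemma linrec_eq_B_mul (X : nat -> Z) :
  linrec X -> X O = 0 -> forall j, X j = B k j * X 1%nat.
Proof.
  intros HX H0 j.
  enough (H : X j = B k j * X 1%nat /\ X (S j) = B k (S j) * X 1%nat) by apply H.
  induction j as [|j [IHj IHSj]].
  - rewrite B_0, B_1, H0; split; ring.
  - split; [exact IHSj|].
    rewrite HX, B_rec, IHj, IHSj; ring.
Qed.

Lemma linrec_casoratian (X Y : nat -> Z) (m : nat) :
  linrec X -> linrec Y ->
  X (S m) * Y m - X m * Y (S m)
  = (k - 1) ^ Z.of_nat m * (X 1%nat * Y O - X O * Y 1%nat).
Proof.
  intros HX HY; induction m as [|m IHm].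
  - rewrite Z.pow_0_r; ring.
  - rewrite Nat2Z.inj_succ, Z.pow_succ_r by lia.
    rewrite HX, HY.
    transitivity ((k - 1) * (X (S m) * Y m - X m * Y (S m))); [ring|].
    rewrite IHm; ring.
Qed.

Lemma C_succ_sub_3C (j : nat) : C k (S j) - 3 * C k j = 8 * (k - 1) * B k j.
Proof.
  rewrite (linrec_eq_B_mul (fun i => C k (S i) - 3 * C k i)).
  - rewrite (C_rec k 0), C_1, C_0; ring.
  - intro i; rewrite (C_rec k (S i)), (C_rec k i); ring.
  - rewrite C_1, C_0; reflexivity.
Qed.

Lemma C_vajda (m r j : nat) :
  C k (m + r + j) * C k m - C k (m + r) * C k (m + j)
  = 8 * (k - 1) ^ Z.of_nat (m + 1) * B k r * B k j.
Proof.
  rewrite (linrec_eq_B_mul (fun i => C k (m + r + i) * C k m - C k (m + r) * C k (m + i))).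
  - pose proof (linrec_casoratian (fun i => C k (r + i)) (C k) m
                  (linrec_shift _ r linrec_C) linrec_C) as Hcas.
    cbv beta in Hcas.
    rewrite C_0, C_1, Nat.add_0_r, Nat.add_1_r in Hcas.
    replace (m + r + 1)%nat with (r + S m)%nat by lia.
    rewrite (Nat.add_comm m r), Nat.add_1_r, Hcas, Nat2Z.inj_succ, Z.pow_succ_r by lia.
    replace (C k (S r) * 1 - C k r * 3) with (C k (S r) - 3 * C k r) by ring.
    rewrite C_succ_sub_3C; ring.
  - intro i; rewrite !Nat.add_succ_r, !C_rec; ring.
  - rewrite !Nat.add_0_r; ring.
Qed.

End Recurrence.

Theorem mainTheorem4 (k : Z) (n r : nat) :
  1 <= k -> (2 <= n)%nat -> (r <= n)%nat ->
  C k (n + r) * C k (n - r) - C k n ^ 2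
  = 8 * (k - 1) ^ Z.of_nat (n - r + 1) * B k r ^ 2.
Proof.
  (* The identity holds for every k and n; only r <= n is needed. *)
  intros _ _ Hrn.
  replace n with (n - r + r)%nat at 1 3 by lia.
  rewrite Z.pow_2_r, C_vajda; ring.
Qed.
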